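(* For an implication of canonical form $(\ast)$ and an environment $\eta$, the Parametricity Condition holds if and only if the implication is $n$-ary $\eta$-valid for every $n\ge1$.
   Context: $\mathsf{Heap}$: finite partial functions $\mathsf{PosInt}\to\mathsf{Int}$; $g\sqsubseteq h$ means $h$ extends $g$; $h\cdot g$ union of disjoint heaps; componentwise on $\mathsf{Heap}^n$. $\mathsf{IRel}_n$: upward closed subsets of $\mathsf{Heap}^n$; $p*q=\{\mathbf f\cdot\mathbf g\mid\mathbf f\in p,\mathbf g\in q,\text{componentwise disjoint}\}$; $\Delta_n(X)=\{(h_1,\dots,h_n)\mid\exists f\in X.\ \forall k.\ f\sqsubseteq h_k\}$. Assertions: built from primitive assertions $P$, assertion variables, $\mathsf{true},\mathsf{false},\wedge,\vee,*$, quantifiers over integer variables. $n$-ary meaning under $\eta$ and $\rho:\mathsf{AVar}\to\mathsf{IRel}_n$: $[\![P]\!]^n=\Delta_n([\![P]\!]^{\mathrm{prim}}_\eta)$, $[\![a]\!]^n=\rho(a)$, connectives by $\mathsf{Heap}^n,\emptyset,\cap,\cup,*$, quantifiers by unions/intersections. $n$-ary $\eta$-validity of $\varphi\Rightarrow\psi$: $[\![\varphi]\!]^n_{\eta,\rho}\subseteq[\![\psi]\!]^n_{\eta,\rho}$ for all $\rho:\mathsf{AVar}\to\mathsf{IRel}_n$. Canonical form $(\ast)$: $\bigwedge_{i=1}^M\varphi_i*a_{i,1}*\cdots*a_{i,M_i}\Rightarrow\bigvee_{j=1}^N\psi_j*b_{j,1}*\cdots*b_{j,N_j}$, $M\ge1$,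 $N\ge0$, $\varphi_i,\psi_j$ free of assertion variables, every $b_{j,k}$ among the $a_{i,k}$. $V=\{a_{i,k}\}$; $\Pi(i)(c)=|\{k\mid a_{i,k}=c\}|$, $\Omega(j)(c)=|\{k\mid b_{j,k}=c\}|$; $\Pi(i)\ge\Omega(j)$ iff $\Pi(i)(c)\ge\Omega(j)(c)$ for all $c\in V$. Disjunct $j$ is empty if $N_j=0$. Parametricity Condition: for all $h,h_1,\dots,h_M\in\mathsf{Heap}$ with $h_i\sqsubseteq h$ and $h_i\in[\![\varphi_i]\!]^1_\eta$ for all $i$, either (1) there are $i,j$ with $h_i\in[\![\psi_j]\!]^1_\eta$ and $\Pi(i)\ge\Omega(j)$, or (2) there is an empty disjunct $j$ with $h\in[\![\psi_j]\!]^1_\eta$. *)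

From Stdlib Require Import ZArith List Vectors.Fin.
Import ListNotations.
Set Implicit Arguments.

Record Heap := mkHeap {
  hval : positive -> option Z;
  hfin : exists dom : list positive, forall p, hval p <> None -> In p dom }.

Definition hsub (g h : Heap) : Prop :=
  forall l v, hval g l = Some v -> hval h l = Some v.

Definition hdisj (g h : Heap) : Prop :=
  forall l, hval g l = None \/ hval h l = None.

Definition hunion_is (g h u : Heap) : Prop :=
  forall l, hval u l = match hval g l with Some v => Some v | None => hval h l end.

Definition tuple (n : nat) := Fin.t n -> Heap.
Definition hset (n : nat) := tuple n -> Prop.

Definition upclosed (n : nat) (p : hset n) : Prop :=
  forall f g : tuple n, p f -> (forall k, hsub (f k) (g k)) -> p g.

Definition hstar (n : nat) (p q : hset n) : hset n :=
  fun x => exists f g, p f /\ q g /\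
    forall k, hdisj (f k) (g k) /\ hunion_is (f k) (g k) (x k).

Definition Delta (n : nat) (X : Heap -> Prop) : hset n :=
  fun hs => exists f, X f /\ forall k, hsub f (hs k).

Definition ivar := nat.
Definition avar := nat.
Definition env := ivar -> Z.

Definition upd (eta : env) (x : ivar) (v : Z) : env :=
  fun y => if Nat.eqb y x then v else eta y.

Inductive assn (PA : Type) : Type :=
| APrim (P : PA)
| AVar (a : avar)
| ATrue
| AFalse
| AAnd (p q : assn PA)
| AOr (p q : assn PA)
| AStar (p q : assn PA)
| AEx (x : ivar) (p : assn PA)
| AAll (x : ivar) (p : assn PA).

Arguments ATrue {PA}.
Arguments AFalse {PA}.
Arguments AVar {PA}.

Fixpoint sem {PA : Type} (prim : env -> PA -> Heap -> Prop) (n : nat)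
  (eta : env) (rho : avar -> hset n) (p : assn PA) : hset n :=
  match p with
  | APrim P => @Delta n (prim eta P)
  | AVar a => rho a
  | ATrue => fun _ => True
  | AFalse => fun _ => False
  | AAnd p q => fun x => sem prim eta rho p x /\ sem prim eta rho q x
  | AOr p q => fun x => sem prim eta rho p x \/ sem prim eta rho q x
  | AStar p q => @hstar n (sem prim eta rho p) (sem prim eta rho q)
  | AEx y p => fun x => exists v : Z, sem prim (upd eta y v) rho p x
  | AAll y p => fun x => forall v : Z, sem prim (upd eta y v) rho p x
  end.

Fixpoint avar_free {PA : Type} (p : assn PA) : Prop :=
  match p with
  | AVar _ => False
  | APrim _ | ATrue | AFalse => True
  | AAnd p q | AOr p q | AStar p q => avar_free p /\ avar_free q
  | AEx _ p | AAll _ p => avar_free p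
  end.

Definition nvalid {PA : Type} (prim : env -> PA -> Heap -> Prop) (n : nat)
  (eta : env) (p q : assn PA) : Prop :=
  forall rho : avar -> hset n, (forall a, upclosed (rho a)) ->
    forall x, sem prim eta rho p x -> sem prim eta rho q x.

(** unary semantics of an assertion-variable-free assertion, as a set of heaps
    (rho is irrelevant; we use the empty relation, which is upward closed) *)
Definition sem1 {PA : Type} (prim : env -> PA -> Heap -> Prop) (eta : env)
  (p : assn PA) (h : Heap) : Prop :=
  sem prim eta (fun _ _ => False) p (fun _ : Fin.t 1 => h).

(** * Canonical form (star)
    A conjunct/disjunct is a pair (phi, [a_1; ...; a_k]) denoting
    phi * a_1 * ... * a_k (left associated). *)
Definition clause (PA : Type) := (assn PA * list avar)%type.

Definition clause_assn {PA : Type} (c : clause PA) : assn PA :=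
  fold_left (fun acc a => AStar acc (AVar a)) (snd c) (fst c).

Fixpoint bigand {PA : Type} (c : assn PA) (cs : list (assn PA)) : assn PA :=
  match cs with
  | [] => c
  | c' :: cs' => AAnd c (bigand c' cs')
  end.

Fixpoint bigor {PA : Type} (ds : list (assn PA)) : assn PA :=
  match ds with
  | [] => AFalse
  | [d] => d
  | d :: ds' => AOr d (bigor ds')
  end.

(** The implication of canonical form; conjuncts given as a nonempty list
    (c0 :: cs), i.e. M >= 1. *)
Definition canon_lhs {PA : Type} (c0 : clause PA) (cs : list (clause PA)) : assn PA :=
  bigand (clause_assn c0) (map clause_assn cs).
Definition canon_rhs {PA : Type} (ds : list (clause PA)) : assn PA :=
  bigor (map clause_assn ds).

Definition canonical {PA : Type} (conj : list (clause PA)) (disj : list (clause PA)) : Prop :=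
  conj <> [] /\
  (forall c, In c conj -> avar_free (fst c)) /\
  (forall d, In d disj -> avar_free (fst d)) /\
  (forall d b, In d disj -> In b (snd d) -> exists c, In c conj /\ In b (snd c)).

Definition Vset {PA : Type} (conj : list (clause PA)) : list avar :=
  flat_map (@snd _ _) conj.

Definition mult_ge {PA : Type} (V : list avar) (ci dj : clause PA) : Prop :=
  forall c, In c V ->
    count_occ Nat.eq_dec (snd dj) c <= count_occ Nat.eq_dec (snd ci) c.

(** The Parametricity Condition.  The heaps h_1..h_M are given by
    hs : nat -> Heap, h_i = hs (i-1). *)
Definition parametricity {PA : Type} (prim : env -> PA -> Heap -> Prop) (eta : env)
  (conj disj : list (clause PA)) : Prop :=
  forall (h : Heap) (hs : nat -> Heap),
    (forall i, i < length conj -> hsub (hs i) h) ->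
    (forall i c, nth_error conj i = Some c -> sem1 prim eta (fst c) (hs i)) ->
    (exists i j ci dj, nth_error conj i = Some ci /\ nth_error disj j = Some dj /\
        sem1 prim eta (fst dj) (hs i) /\ mult_ge (Vset conj) ci dj)
    \/
    (exists dj, In dj disj /\ snd dj = [] /\ sem1 prim eta (fst dj) h).

From Stdlib Require Import ZArith List Lia Permutation Classical ClassicalEpsilon.
Import ListNotations.

(** The key fact is the Delta property [sem_meet]: an assertion without
    assertion variables holds of a tuple of heaps iff it holds of the meet of
    the tuple.  Soundness: given a tuple satisfying the antecedent, the meets of
    the pure parts of the conjuncts are heaps [h_i] below the meet [h] of the
    tuple, to which the Parametricity Condition applies; its clause (1) rebuilds
    a disjunct from a conjunct by keeping a sub-multiset of its variables, and
    clause (2) yields an empty disjunct directly.  Completeness: from [h] and the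
    [h_i] we build one countermodel satisfying the antecedent; whichever disjunct
    it satisfies exhibits the Parametricity Condition. *)

Definition hrestrict (h : Heap) (P : positive -> Prop) : Heap.
Proof.
  refine (mkHeap (fun l => if excluded_middle_informative (P l) then hval h l else None) _).
  destruct (hfin h) as [dom Hdom]. exists dom. intros p Hp. apply Hdom.
  destruct (excluded_middle_informative (P p)); congruence.
Defined.

Lemma hrestrict_in h P l : P l -> hval (hrestrict h P) l = hval h l.
Proof. simpl. destruct (excluded_middle_informative (P l)); tauto. Qed.

Lemma hrestrict_out h P l : ~ P l -> hval (hrestrict h P) l = None.
Proof. simpl. destruct (excluded_middle_informative (P l)); tauto. Qed.

Lemma hrestrict_some h P l v :
  hval (hrestrict h P) l = Some v -> P l /\ hval h l = Some v.
Proof. simpl. destruct (excluded_middle_informative (P l)); intuition congruence. Qed.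

Lemma hrestrict_sub h P : hsub (hrestrict h P) h.
Proof. intros l v H. apply hrestrict_some in H. tauto. Qed.

Lemma hrestrict_disj x y (P Q : positive -> Prop) :
  (forall l, P l -> Q l -> False) -> hdisj (hrestrict x P) (hrestrict y Q).
Proof.
  intros H l. destruct (excluded_middle_informative (P l)) as [HP|HP].
  - right. apply hrestrict_out. intros HQ. exact (H l HP HQ).
  - left. apply hrestrict_out, HP.
Qed.

Definition hjoin (g h : Heap) : Heap.
Proof.
  refine (mkHeap (fun l => match hval g l with Some v => Some v | None => hval h l end) _).
  destruct (hfin g) as [d1 H1], (hfin h) as [d2 H2]. exists (d1 ++ d2).
  intros p Hp. apply in_or_app. destruct (hval g p) eqn:E.
  - left. apply H1. congruence.
  - right. apply H2. auto.
Defined.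

Definition hcell (l0 : positive) (v : Z) : Heap.
Proof.
  refine (mkHeap (fun l => if Pos.eq_dec l l0 then Some v else None) _).
  exists [l0]. intros p. destruct (Pos.eq_dec p l0) as [->|]; simpl; tauto.
Defined.

Definition hminus (x g : Heap) : Heap := hrestrict x (fun l => hval g l = None).

Lemma le_fold_max (dom : list positive) p :
  In p dom -> (p <= fold_right Pos.max 1%positive dom)%positive.
Proof.
  induction dom as [|a dom IH]; simpl; [tauto|].
  intros [->|H]; [lia|]. specialize (IH H). lia.
Qed.

Lemma fresh_loc (h : Heap) : exists l, hval h l = None.
Proof.
  destruct (hfin h) as [dom Hdom]. exists (Pos.succ (fold_right Pos.max 1%positive dom)).
  destruct (hval h _) eqn:E; auto. exfalso.
  assert (Hin : In (Pos.succ (fold_right Pos.max 1%positive dom)) dom) by (apply Hdom; congruence).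
  apply le_fold_max in Hin. lia.
Qed.

Lemma hsub_refl h : hsub h h.
Proof. unfold hsub; auto. Qed.

Lemma hsub_trans a b c : hsub a b -> hsub b c -> hsub a c.
Proof. unfold hsub; auto. Qed.

Lemma union_sub_l {f g x} : hunion_is f g x -> hsub f x.
Proof. intros U l v H. rewrite U, H. auto. Qed.

Lemma union_sub_r {f g x} : hdisj f g -> hunion_is f g x -> hsub g x.
Proof. intros D U l v H. rewrite U. destruct (D l) as [E|E]; rewrite E; congruence. Qed.

Lemma hdisj_sym {f g} : hdisj f g -> hdisj g f.
Proof. intros D l. destruct (D l); auto. Qed.

Lemma hdisj_mono f f' g g' : hsub f f' -> hsub g g' -> hdisj f' g' -> hdisj f g.
Proof.
  intros H1 H2 D l. destruct (hval f l) eqn:E1; auto. destruct (hval g l) eqn:E2; auto.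
  apply H1 in E1. apply H2 in E2. destruct (D l); congruence.
Qed.

Lemma hdisj_clash f g l v w : hdisj f g -> hval f l = Some v -> hval g l = Some w -> False.
Proof. intros D E1 E2. destruct (D l); congruence. Qed.

Lemma hminus_union {g x} : hsub g x -> hdisj (hminus x g) g /\ hunion_is (hminus x g) g x.
Proof.
  intros S. split.
  - intros l. destruct (hval g l) eqn:E; auto. left. apply hrestrict_out. congruence.
  - intros l. unfold hminus. destruct (hval g l) eqn:E.
    + rewrite hrestrict_out by congruence. apply S in E. auto.
    + rewrite hrestrict_in by auto. destruct (hval x l); auto.
Qed.

Lemma hminus_sub f g x : hsub f x -> hdisj f g -> hsub f (hminus x g).
Proof.
  intros S D l v H. unfold hminus. rewrite hrestrict_in by (destruct (D l); congruence).
  apply S; auto.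
Qed.

Definition tsub {n} (f g : tuple n) := forall k, hsub (f k) (g k).
Definition tdisj {n} (f g : tuple n) := forall k, hdisj (f k) (g k).

Lemma tsub_refl {n} (f : tuple n) : tsub f f.
Proof. intros k; apply hsub_refl. Qed.

Lemma tsub_trans {n} (f g h : tuple n) : tsub f g -> tsub g h -> tsub f h.
Proof. intros H1 H2 k. eapply hsub_trans; eauto. Qed.

Definition above {n} (f : tuple n) : hset n := fun y => tsub f y.

Lemma above_upclosed {n} (f : tuple n) : upclosed (above f).
Proof. intros a b H1 H2. eapply tsub_trans; eauto. Qed.

Lemma hstar_mono {n} (A A' B B' : hset n) :
  (forall x, A x -> A' x) -> (forall x, B x -> B' x) ->
  forall x, hstar A B x -> hstar A' B' x.
Proof. intros H1 H2 x [f [g [Hf [Hg Hk]]]]. exists f, g. auto. Qed.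

Lemma hstar_upclosed {n} {A B : hset n} : upclosed A -> upclosed (hstar A B).
Proof.
  intros UA x y [f [g [Hf [Hg Hk]]]] Hxy.
  assert (Sg : tsub g y).
  { intros k. destruct (Hk k) as [D U]. eapply hsub_trans; [apply (union_sub_r D U)|apply Hxy]. }
  exists (fun k => hminus (y k) (g k)), g. repeat split; auto;
    try apply (hminus_union (Sg k)).
  apply (UA f); auto. intros k. destruct (Hk k) as [D U]. apply hminus_sub; auto.
  eapply hsub_trans; [apply (union_sub_l U)|apply Hxy].
Qed.

Lemma hstar_shrink {n} {A B : hset n} : upclosed A -> forall x, hstar A B x -> A x.
Proof.
  intros UA x [f [g [Hf [Hg Hk]]]]. apply (UA f); auto.
  intros k. destruct (Hk k) as [D U]. apply (union_sub_l U).
Qed.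

Lemma hstar_comm {n} (A B : hset n) x : hstar A B x -> hstar B A x.
Proof.
  intros [f [g [Hf [Hg Hk]]]]. exists g, f. repeat split; auto.
  - apply hdisj_sym, Hk.
  - intros l. destruct (Hk k) as [D U]. rewrite U.
    destruct (D l) as [E|E]; rewrite E; [destruct (hval (g k) l)|destruct (hval (f k) l)]; auto.
Qed.

Lemma hstar_assoc {n} (A B C : hset n) x : hstar (hstar A B) C x -> hstar A (hstar B C) x.
Proof.
  intros [fg [h [[f [g [Hf [Hg Hk1]]]] [Hh Hk2]]]].
  exists f, (fun k => hjoin (g k) (h k)). repeat split; auto.
  - exists g, h. repeat split; auto.
    destruct (Hk1 k) as [D1 U1], (Hk2 k) as [D2 U2].
    eapply hdisj_mono; [apply (union_sub_r D1 U1)|apply hsub_refl|auto].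
  - intros l. destruct (Hk1 k) as [D1 U1], (Hk2 k) as [D2 U2].
    destruct (hval (f k) l) eqn:E; auto. right. simpl.
    destruct (D1 l) as [E1|E1]; try congruence. rewrite E1.
    destruct (D2 l) as [E2|E2]; auto. rewrite U1, E in E2. congruence.
  - intros l. destruct (Hk1 k) as [D1 U1], (Hk2 k) as [D2 U2].
    rewrite U2, U1. simpl. destruct (hval (f k) l); auto.
Qed.

Lemma hstar_exchange {n} (A B C : hset n) x : hstar (hstar A B) C x -> hstar (hstar A C) B x.
Proof.
  intros H. apply hstar_assoc in H.
  assert (H1 : hstar A (hstar C B) x) by (eapply hstar_mono; [| |exact H]; auto using hstar_comm).
  apply hstar_comm, hstar_assoc, hstar_comm, hstar_assoc, hstar_comm in H1.
  eapply hstar_mono; [| |exact H1]; auto using hstar_comm.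
Qed.

(** * The meet of a tuple

    For [x : tuple (S n)], [meet x] is the largest heap below every component;
    it is the restriction of the first component to the locations on which all
    components agree. *)
Definition meet {n} (x : tuple (S n)) : Heap :=
  hrestrict (x Fin.F1) (fun l => forall k, hval (x k) l = hval (x Fin.F1) l).

Lemma meet_sub {n} (x : tuple (S n)) k : hsub (meet x) (x k).
Proof. intros l v H. apply hrestrict_some in H. destruct H as [H1 H2]. rewrite H1. auto. Qed.

Lemma meet_glb {n} (x : tuple (S n)) a : (forall k, hsub a (x k)) -> hsub a (meet x).
Proof.
  intros H l v Hl. unfold meet. rewrite hrestrict_in; [apply H; auto|].
  intros k. rewrite (H k l v Hl), (H Fin.F1 l v Hl). auto.
Qed.

Lemma meet_mono {n} (x y : tuple (S n)) : tsub x y -> hsub (meet x) (meet y).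
Proof. intros H. apply meet_glb. intros k. eapply hsub_trans; [apply meet_sub|apply H]. Qed.

Lemma fin1 (k : Fin.t 1) : k = Fin.F1.
Proof. apply (Fin.caseS' k (fun k => k = Fin.F1)); [reflexivity|]. intros p. inversion p. Qed.

Lemma upclosed_const1 (a : hset 1) F : upclosed a -> a F -> a (fun _ => F Fin.F1).
Proof. intros Ua H. apply (Ua F); auto. intros k. rewrite (fin1 k). apply hsub_refl. Qed.

Lemma meet_hstar {n} (A B : hset (S n)) (a b : hset 1) :
  upclosed a -> upclosed b ->
  (forall y, A y <-> a (fun _ => meet y)) -> (forall y, B y <-> b (fun _ => meet y)) ->
  forall x, hstar A B x <-> hstar a b (fun _ => meet x).
Proof.
  intros Ua Ub HA HB x. split.
  -
    intros [f [g [Hf [Hg Hk]]]]. apply HA in Hf. apply HB in Hg.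
    assert (Sf : hsub (meet f) (meet x)).
    { apply meet_mono. intros k. destruct (Hk k) as [D U]. apply (union_sub_l U). }
    assert (Sg : hsub (meet g) (meet x)).
    { apply meet_mono. intros k. destruct (Hk k) as [D U]. apply (union_sub_r D U). }
    assert (Dfg : hdisj (meet f) (meet g)).
    { eapply hdisj_mono; [apply (meet_sub f Fin.F1)|apply (meet_sub g Fin.F1)|apply Hk]. }
    exists (fun _ => hminus (meet x) (meet g)), (fun _ => meet g).
    split; [|split; [exact Hg|intros _; apply hminus_union, Sg]].
    apply (Ua _ _ Hf). intros _. apply hminus_sub; auto.
  - (* a unary splitting [c·d] of the meet lifts to [c] and [x - c] *)
    intros [F [G [HF [HG Hk]]]]. destruct (Hk Fin.F1) as [D U]. set (c := F Fin.F1).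
    assert (Sc : forall k, hsub c (x k)).
    { intros k. eapply hsub_trans; [apply (union_sub_l U)|apply meet_sub]. }
    exists (fun _ => c), (fun k => hminus (x k) c). repeat split.
    + apply HA, (Ua _ _ (upclosed_const1 _ _ Ua HF)). intros _.
      apply meet_glb. intros; apply hsub_refl.
    + apply HB, (Ub _ _ (upclosed_const1 _ _ Ub HG)). intros _.
      apply meet_glb. intros k. apply hminus_sub; [|apply hdisj_sym, D].
      eapply hsub_trans; [apply (union_sub_r D U)|apply meet_sub].
    + apply hdisj_sym, hminus_union, Sc.
    + intros l. destruct (hval c l) eqn:E.
      * apply (Sc k l _ E).
      * unfold hminus. rewrite hrestrict_in; auto.
Qed.

Section AvarFree.
Context {PA : Type} (prim : env -> PA -> Heap -> Prop).

Lemma sem_upclosed {p : assn PA} :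
  avar_free p -> forall n eta (rho : avar -> hset n), upclosed (sem prim eta rho p).
Proof.
  induction p; simpl; intros Hf n eta rho; try contradiction.
  - intros x y [f [Hf1 Hf2]] Hxy. exists f. split; auto. intros k; eapply hsub_trans; eauto.
  - intros x y _ _; auto.
  - intros x y [].
  - destruct Hf as [F1 F2]. intros x y [H1 H2] Hxy.
    split; [eapply (IHp1 F1)|eapply (IHp2 F2)]; eauto.
  - destruct Hf as [F1 F2]. intros x y [H1|H2] Hxy;
      [left; eapply (IHp1 F1)|right; eapply (IHp2 F2)]; eauto.
  - destruct Hf as [F1 _]. apply hstar_upclosed, IHp1; auto.
  - intros t u [v H] Htu. exists v. eapply IHp; eauto.
  - intros t u H Htu v. eapply IHp; eauto.
Qed.

Lemma sem1_up {p : assn PA} {eta a b} :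
  avar_free p -> sem1 prim eta p a -> hsub a b -> sem1 prim eta p b.
Proof. intros F H S. eapply (sem_upclosed F); eauto. Qed.

Lemma sem_meet {p : assn PA} : avar_free p ->
  forall n eta (rho : avar -> hset (S n)) x,
    sem prim eta rho p x <-> sem1 prim eta p (meet x).
Proof.
  induction p as [P|a| | |p1 IH1 p2 IH2|p1 IH1 p2 IH2|p1 IH1 p2 IH2|y p IH|y p IH];
    intros Hf n eta rho x; simpl in Hf; try contradiction; unfold sem1 in *; simpl.
  - split.
    + intros [f [H1 H2]]. exists f. split; auto. intros _. apply meet_glb. auto.
    + intros [f [H1 H2]]. exists f. split; auto. intros k.
      eapply hsub_trans; [apply (H2 Fin.F1)|apply meet_sub].
  - tauto.
  - tauto.
  - destruct Hf as [F1 F2]. rewrite (IH1 F1), (IH2 F2). tauto.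
  - destruct Hf as [F1 F2]. rewrite (IH1 F1), (IH2 F2). tauto.
  - destruct Hf as [F1 F2]. apply meet_hstar.
    + apply (sem_upclosed F1).
    + apply (sem_upclosed F2).
    + intros y. apply (IH1 F1).
    + intros y. apply (IH2 F2).
  - split; intros [v H]; exists v; apply (IH Hf _ _ rho); auto.
  - split; intros H v; apply (IH Hf _ _ rho); auto.
Qed.

End AvarFree.

Lemma submultiset_perm (l' l : list avar) :
  (forall c, count_occ Nat.eq_dec l' c <= count_occ Nat.eq_dec l c) ->
  exists rest, Permutation l (l' ++ rest).
Proof.
  revert l. induction l' as [|b l' IH]; intros l H.
  - exists l. apply Permutation_refl.
  - assert (Hin : In b l).
    { apply (count_occ_In Nat.eq_dec). specialize (H b). simpl in H.
      destruct (Nat.eq_dec b b); [lia|congruence]. }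
    apply in_split in Hin. destruct Hin as [l1 [l2 ->]].
    destruct (IH (l1 ++ l2)) as [rest Hr].
    { intros c. specialize (H c). rewrite count_occ_app in *. simpl in H.
      destruct (Nat.eq_dec b c); lia. }
    exists rest. simpl. eapply Permutation_trans;
      [apply Permutation_sym, Permutation_middle|apply perm_skip, Hr].
Qed.

Lemma count_occ_positions (c : nat) (l : list nat) : forall d : list nat,
  count_occ Nat.eq_dec l c =
  length (filter (fun k => Nat.eqb (nth k (d ++ l) 0) c) (seq (length d) (length l))).
Proof.
  induction l as [|a l IH]; intros d; simpl; auto.
  rewrite nth_middle. specialize (IH (d ++ [a])). rewrite <- app_assoc, length_app in IH.
  simpl in IH. rewrite Nat.add_1_r in IH.
  destruct (Nat.eq_dec a c) as [->|Hne]; simpl.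
  - rewrite Nat.eqb_refl. simpl. rewrite IH. reflexivity.
  - apply Nat.eqb_neq in Hne. rewrite Hne. exact IH.
Qed.

Lemma count_inj (L1 L2 : list nat) (g : nat -> nat) :
  (forall k, k < length L1 -> g k < length L2 /\ nth (g k) L2 0 = nth k L1 0) ->
  (forall k k', k < length L1 -> k' < length L1 -> g k = g k' -> k = k') ->
  forall c, count_occ Nat.eq_dec L1 c <= count_occ Nat.eq_dec L2 c.
Proof.
  intros H1 H2 c. rewrite !(count_occ_positions c _ []). simpl.
  rewrite <- (length_map g). apply NoDup_incl_length.
  - apply NoDup_map_NoDup_ForallPairs; [|apply NoDup_filter, seq_NoDup].
    intros a b Ha Hb. apply filter_In in Ha, Hb.
    destruct Ha as [Ha _], Hb as [Hb _]. apply in_seq in Ha, Hb. apply H2; lia.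
  - intros y Hy. apply in_map_iff in Hy. destruct Hy as [a [<- Ha]].
    apply filter_In in Ha. destruct Ha as [Ha Hc]. apply in_seq in Ha.
    destruct (H1 a) as [H3 H4]; [lia|].
    apply filter_In. split; [apply in_seq; lia|]. rewrite H4. exact Hc.
Qed.

Section StarVars.
Context {n : nat} (rho : avar -> hset n).

Definition starvars (A : hset n) (l : list avar) : hset n :=
  fold_left (fun acc a => hstar acc (rho a)) l A.

Lemma starvars_app A l1 l2 : starvars A (l1 ++ l2) = starvars (starvars A l1) l2.
Proof. unfold starvars. rewrite fold_left_app. reflexivity. Qed.

Lemma starvars_mono l : forall (A A' : hset n), (forall x, A x -> A' x) ->
  forall x, starvars A l x -> starvars A' l x.
Proof.
  induction l as [|a l IH]; simpl; intros A A' H x; auto.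
  apply IH. intros y. apply hstar_mono; auto.
Qed.

Lemma starvars_upclosed l : forall A, upclosed A -> upclosed (starvars A l).
Proof. induction l as [|a l IH]; simpl; intros A H; auto. apply IH, hstar_upclosed, H. Qed.

Lemma starvars_shrink l : forall A, upclosed A -> forall x, starvars A l x -> A x.
Proof.
  induction l as [|a l IH]; simpl; intros A H x Hx; auto.
  apply (hstar_shrink (B := rho a) H). apply IH; auto. apply hstar_upclosed, H.
Qed.

Lemma starvars_perm l l' : Permutation l l' ->
  forall A x, starvars A l x -> starvars A l' x.
Proof.
  induction 1; simpl; intros A z Hz; auto.
  eapply starvars_mono; [|exact Hz]. intros w. apply hstar_exchange.
Qed.

Lemma starvars_sub A l l' x : upclosed A ->
  (forall c, count_occ Nat.eq_dec l' c <= count_occ Nat.eq_dec l c) ->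
  starvars A l x -> starvars A l' x.
Proof.
  intros UA Hc Hx. destruct (submultiset_perm l' l Hc) as [rest Hr].
  apply (starvars_perm _ _ Hr) in Hx. rewrite starvars_app in Hx.
  apply (starvars_shrink rest); auto. apply starvars_upclosed, UA.
Qed.

Lemma starvars_pin l : forall A x, starvars A l x ->
  exists f, A f /\ starvars (above f) l x.
Proof.
  induction l as [|a l IH]; simpl; intros A x Hx.
  - exists x. split; auto. apply tsub_refl.
  - apply IH in Hx. destruct Hx as [f' [[f [g [Hf [Hg Hk]]]] Hx]].
    exists f. split; auto. eapply starvars_mono; [|exact Hx]. intros y Hy.
    apply (hstar_upclosed (above_upclosed f) f'); auto.
    exists f, g. split; [apply tsub_refl|auto].
Qed.

Lemma starvars_elim l : forall A x, starvars A l x ->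
  exists f (gs : nat -> tuple n), A f /\ tsub f x /\
    (forall i, i < length l -> rho (nth i l 0) (gs i) /\ tsub (gs i) x /\ tdisj f (gs i)) /\
    (forall i j, i < j < length l -> tdisj (gs i) (gs j)).
Proof.
  induction l as [|a l IH]; simpl; intros A x Hx.
  - exists x, (fun _ => x). repeat split; intros; auto using tsub_refl; lia.
  - apply IH in Hx. destruct Hx as [f' [gs' [[f [g [Hf [Hg Hk]]]] [Sf' [Hgs Hpd]]]]].
    assert (Sf : tsub f f') by (intros k; destruct (Hk k) as [D U]; apply (union_sub_l U)).
    assert (Sg : tsub g f') by (intros k; destruct (Hk k) as [D U]; apply (union_sub_r D U)).
    exists f, (fun i => match i with 0 => g | S i => gs' i end).
    split; [auto|]. split; [eapply tsub_trans; eauto|]. split.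
    + intros [|i] Hi; simpl.
      * split; [auto|]. split; [eapply tsub_trans; eauto|]. intros k; apply Hk.
      * destruct (Hgs i) as [H1 [H2 H3]]; [lia|]. repeat split; auto.
        intros k. eapply hdisj_mono; [apply Sf|apply hsub_refl|apply H3].
    + intros [|i] [|j] Hij; try lia.
      * destruct (Hgs j) as [_ [_ H3]]; [lia|].
        intros k. eapply hdisj_mono; [apply Sg|apply hsub_refl|apply H3].
      * apply Hpd. lia.
Qed.

Lemma starvars_intro (A : hset n) f (gs : nat -> tuple n) l : forall x,
  upclosed A -> A f -> tsub f x ->
  (forall i, i < length l -> rho (nth i l 0) (gs i) /\ tsub (gs i) x /\ tdisj f (gs i)) ->
  (forall i j, i < j < length l -> tdisj (gs i) (gs j)) ->
  (forall k p, hval (x k) p <> None ->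
     hval (f k) p <> None \/ exists i, i < length l /\ hval (gs i k) p <> None) ->
  starvars A l x.
Proof.
  induction l as [|a l IH] using rev_ind; intros x UA Hf Sf Hgs Hpd Hcov.
  - simpl. apply (UA f); auto.
  - rewrite starvars_app. simpl. set (g := gs (length l)).
    rewrite length_app in Hgs, Hpd, Hcov. simpl in Hgs, Hpd, Hcov.
    destruct (Hgs (length l)) as [Hg1 [Hg2 Hg3]]; [lia|].
    exists (fun k => hminus (x k) (g k)), g. split; [|split].
    + apply IH; auto.
      * intros k. apply hminus_sub; auto.
      * intros i Hi. destruct (Hgs i) as [H1 [H2 H3]]; [lia|].
        rewrite app_nth1 in H1 by lia. repeat split; auto.
        intros k. apply hminus_sub; auto. apply Hpd. lia.
      * intros i j Hij. apply Hpd. lia.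
      * intros k p Hp. unfold hminus in Hp.
        destruct (excluded_middle_informative (hval (g k) p = None)) as [Hn|Hn];
          [|rewrite hrestrict_out in Hp; congruence].
        rewrite hrestrict_in in Hp by auto.
        destruct (Hcov k p Hp) as [H|[i [Hi H]]]; auto. right. exists i. split; auto.
        destruct (Nat.eq_dec i (length l)); [subst; unfold g in Hn; congruence|lia].
    + rewrite app_nth2, Nat.sub_diag in Hg1 by lia. exact Hg1.
    + intros k. apply hminus_union, Hg2.
Qed.

End StarVars.

Section CanonicalSemantics.
Context {PA : Type} (prim : env -> PA -> Heap -> Prop) {n : nat} (eta : env)
  (rho : avar -> hset n).

Lemma sem_clause (c : clause PA) :
  sem prim eta rho (clause_assn c) = starvars rho (sem prim eta rho (fst c)) (snd c).
Proof.
  destruct c as [p l]. unfold clause_assn, starvars. simpl. revert p.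
  induction l as [|a l IH]; intros p; simpl; [reflexivity|]. apply (IH (AStar p (AVar a))).
Qed.

Lemma sem_bigand cs : forall (c : assn PA) x,
  sem prim eta rho (bigand c cs) x <->
  sem prim eta rho c x /\ forall c', In c' cs -> sem prim eta rho c' x.
Proof.
  induction cs as [|c' cs IH]; simpl; intros c x; [tauto|].
  rewrite IH. split.
  - intros [H1 [H2 H3]]. split; auto. intros c'' [<-|H]; auto.
  - intros [H1 H2]. auto.
Qed.

Lemma sem_bigor ds : forall x,
  sem prim eta rho (bigor ds) x <-> exists d, In d ds /\ sem prim eta rho d x.
Proof.
  induction ds as [|d ds IH]; intros x.
  - simpl. split; [tauto|]. intros [d [[] _]].
  - destruct ds as [|d' ds'].
    + simpl. split; [eauto|]. intros [d0 [[<-|[]] H]]; auto.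
    + change (bigor (d :: d' :: ds')) with (AOr d (bigor (d' :: ds'))).
      simpl sem. rewrite IH. split.
      * intros [H|[d0 [H1 H2]]]; [exists d|exists d0]; simpl; auto.
      * intros [d0 [[<-|H1] H2]]; auto. right. exists d0; auto.
Qed.

Lemma sem_canon_lhs c0 cs x :
  sem prim eta rho (canon_lhs c0 cs) x <->
  forall c, In c (c0 :: cs) -> sem prim eta rho (clause_assn c) x.
Proof.
  unfold canon_lhs. rewrite sem_bigand. split.
  - intros [H1 H2] c [<-|H]; auto. apply H2, in_map, H.
  - intros H. split; [apply H; simpl; auto|]. intros c' Hc.
    apply in_map_iff in Hc. destruct Hc as [c [<- Hc]]. apply H. simpl; auto.
Qed.

Lemma sem_canon_rhs ds x :
  sem prim eta rho (canon_rhs ds) x <->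
  exists d, In d ds /\ sem prim eta rho (clause_assn d) x.
Proof.
  unfold canon_rhs. rewrite sem_bigor. split.
  - intros [d [Hd H]]. apply in_map_iff in Hd. destruct Hd as [c [<- Hc]]. eauto.
  - intros [d [Hd H]]. exists (clause_assn d). split; auto. apply in_map, Hd.
Qed.

End CanonicalSemantics.

(** In canonical form the comparison [Pi(i) >= Omega(j)], stated over [V] only,
    is a full sub-multiset relation, since the variables of a disjunct occur in [V]. *)
Lemma mult_ge_counts {PA} {conj disj : list (clause PA)} {ci dj} :
  canonical conj disj -> In dj disj -> mult_ge (Vset conj) ci dj ->
  forall c, count_occ Nat.eq_dec (snd dj) c <= count_occ Nat.eq_dec (snd ci) c.
Proof.
  intros [_ [_ [_ Hbv]]] Hdj Hm c. destruct (in_dec Nat.eq_dec c (snd dj)) as [Hin|Hnin].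
  - apply Hm. destruct (Hbv dj c Hdj Hin) as [c' [Hc' Hc'']].
    unfold Vset. apply in_flat_map. eauto.
  - rewrite (count_occ_not_In Nat.eq_dec) in Hnin. rewrite Hnin. lia.
Qed.

(** * Soundness: the Parametricity Condition implies n-ary validity *)

Section Soundness.
Context {PA : Type} (prim : env -> PA -> Heap -> Prop) (eta : env).

Lemma clause_transfer {n} (rho : avar -> hset (S n)) (psi : assn PA) f la lb x :
  avar_free psi -> sem1 prim eta psi (meet f) ->
  (forall c, count_occ Nat.eq_dec lb c <= count_occ Nat.eq_dec la c) ->
  starvars rho (above f) la x -> starvars rho (sem prim eta rho psi) lb x.
Proof.
  intros Fpsi Hpsi Hc Hx. apply starvars_sub with (l := la); auto.
  - apply (sem_upclosed prim Fpsi).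
  - eapply starvars_mono; [|exact Hx]. intros y Hy.
    apply (sem_upclosed prim Fpsi _ _ _ f); auto. apply (sem_meet prim Fpsi n eta rho), Hpsi.
Qed.

(** Soundness; the arity is written [S n] since meets need a component. *)
Lemma soundness (c0 : clause PA) cs ds :
  canonical (c0 :: cs) ds -> parametricity prim eta (c0 :: cs) ds ->
  forall n, nvalid prim (S n) eta (canon_lhs c0 cs) (canon_rhs ds).
Proof.
  intros Hcan Hpar n rho Hrho x Hx. pose proof Hcan as [_ [Hcf [Hdf _]]].
  rewrite sem_canon_lhs in Hx. rewrite sem_canon_rhs.
  (* a witness for the pure part of each conjunct, whose meets form the [h_i] *)
  assert (Hw : forall i, exists f, forall c, nth_error (c0 :: cs) i = Some c ->
            sem prim eta rho (fst c) f /\ starvars rho (above f) (snd c) x).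
  { intros i. destruct (nth_error (c0 :: cs) i) as [c|] eqn:E.
    - assert (H := Hx c (nth_error_In _ _ E)). rewrite sem_clause in H.
      destruct (starvars_pin _ _ _ _ H) as [f Hf]. exists f. intros c' E'. congruence.
    - exists x. discriminate. }
  destruct (choice _ Hw) as [fs Hfs].
  destruct (Hpar (meet x) (fun i => meet (fs i)))
    as [[i [j [ci [dj [Ei [Ej [Hs Hm]]]]]]] | [dj [Hdj [Hnil Hs]]]].
  - intros i Hi. destruct (nth_error (c0 :: cs) i) as [c|] eqn:E.
    + apply meet_mono, (starvars_shrink rho (snd c) _ (above_upclosed _)), Hfs, E.
    + apply nth_error_None in E. lia.
  - intros i c E. apply (sem_meet prim (Hcf c (nth_error_In _ _ E)) n eta rho), Hfs, E.
  - exists dj. split; [eapply nth_error_In; eauto|]. rewrite sem_clause.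
    apply (clause_transfer rho _ (fs i) (snd ci)); auto.
    + apply Hdf. eapply nth_error_In; eauto.
    + apply (mult_ge_counts Hcan); auto. eapply nth_error_In; eauto.
    + apply Hfs, Ei.
  - exists dj. split; auto. rewrite sem_clause, Hnil.
    apply (sem_meet prim (Hdf dj Hdj) n eta rho), Hs.
Qed.

End Soundness.

(** * Completeness: n-ary validity for all n implies the Parametricity Condition

    Given [h] and [h_1 ⊑ h, ..., h_M ⊑ h] with [h_i ∈ [[phi_i]]], we build one
    tuple [x] and an interpretation [rho] making the antecedent true, from which
    the truth of the consequent forces the Parametricity Condition.

    An occurrence [q = (i, k)] is the [k]-th assertion variable of conjunct [i].
    Besides a root component equal to [h], the tuple has one component for each
    pair [(p, p')] of occurrences, equal to [h] extended by a fresh location [B].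
    Each occurrence [q] is given a tuple [G q], and [rho a] is the up-closure of
    the [G q] with [q] an occurrence of [a]:
    - at component [(q, q)], [G q] owns [B] and the part of [h] outside [h_i]; this
      makes [G q] non-empty, and forces the pure part of any disjunct satisfied
      through [G q] below [h_i];
    - at component [(q, q')] with [q], [q'] in different conjuncts, [G q] and
      [G q'] both own [B], so they cannot occur in disjoint parts of a disjunct.
    Within a conjunct the [G q] are disjoint, and their complement [F i] lies
    above [h_i]. *)

Definition occ : Type := (nat * nat)%type.

Section Countermodel.
Context {PA : Type}.
Variables (conjuncts : list (clause PA)) (h : Heap) (hs : nat -> Heap) (B : positive).
Hypothesis HB : hval h B = None.
Hypothesis Hsub : forall i, i < length conjuncts -> hsub (hs i) h.

Definition slots (i : nat) : nat :=
  match nth_error conjuncts i with Some c => length (snd c) | None => 0 end.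

Definition Occ (q : occ) : Prop := snd q < slots (fst q).

Definition var (q : occ) : avar :=
  match nth_error conjuncts (fst q) with Some c => nth (snd q) (snd c) 0 | None => 0 end.

Definition occs : list occ :=
  flat_map (fun i => map (pair i) (seq 0 (slots i))) (seq 0 (length conjuncts)).

Lemma occs_spec q : In q occs <-> Occ q.
Proof.
  unfold occs, Occ, slots. rewrite in_flat_map. destruct q as [i k]. simpl. split.
  - intros [i' [_ Hq]]. apply in_map_iff in Hq. destruct Hq as [k' [E Hk]].
    injection E as <- <-. apply in_seq in Hk. lia.
  - intros Hk. exists i. split.
    + apply in_seq. destruct (nth_error conjuncts i) eqn:E; [|lia].
      assert (i < length conjuncts) by (apply nth_error_Some; congruence). lia.
    + apply in_map, in_seq. lia.
Qed.

Lemma Occ_bound q : Occ q -> fst q < length conjuncts.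
Proof.
  unfold Occ, slots. destruct (nth_error conjuncts (fst q)) eqn:E; [|lia].
  intros _. apply nth_error_Some. congruence.
Qed.

Definition tags : list (occ * occ) := list_prod occs occs.
Definition width : nat := S (length tags).

Definition tagof (c : Fin.t width) : option (occ * occ) :=
  match proj1_sig (Fin.to_nat c) with 0 => None | S m => nth_error tags m end.

Lemma tagof_valid c p p' : tagof c = Some (p, p') -> Occ p /\ Occ p'.
Proof.
  unfold tagof. destruct (Fin.to_nat c) as [[|m] Hm]; simpl; [discriminate|].
  intros E. apply nth_error_In, in_prod_iff in E. rewrite !occs_spec in E. exact E.
Qed.

Lemma tagof_onto p p' : Occ p -> Occ p' -> exists c, tagof c = Some (p, p').
Proof.
  intros Hp Hp'. assert (Ht : In (p, p') tags) by (apply in_prod; apply occs_spec; auto).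
  destruct (In_nth_error _ _ Ht) as [m Em].
  assert (Hm : S m < width) by (apply -> Nat.succ_lt_mono; apply nth_error_Some; congruence).
  exists (Fin.of_nat_lt Hm). unfold tagof. rewrite Fin.to_nat_of_nat. exact Em.
Qed.

Definition comp (t : option (occ * occ)) : Heap :=
  match t with None => h | Some _ => hjoin h (hcell B 0%Z) end.

Lemma comp_h t l v : hval h l = Some v -> hval (comp t) l = Some v.
Proof. intros H. destruct t; simpl; rewrite H; auto. Qed.

Lemma comp_B t : t <> None -> hval (comp t) B = Some 0%Z.
Proof.
  intros Ht. destruct t; [|congruence]. simpl. rewrite HB.
  destruct (Pos.eq_dec B B); congruence.
Qed.

Definition own (t : option (occ * occ)) (q : occ) (l : positive) : Prop :=
  match t with
  | None => False
  | Some (p, p') =>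
      (l = B /\ (q = p \/ q = p') /\ (p = p' \/ fst p <> fst p')) \/
      (l <> B /\ q = p /\ p' = p /\ hval (hs (fst p)) l = None)
  end.

Lemma own_excl t q q' l : fst q = fst q' -> q <> q' -> own t q l -> own t q' l -> False.
Proof.
  destruct t as [[p p']|]; simpl; [|tauto]. intros Hf Hne.
  intros [[El [Hq Hpp]]|[Hl [Eq _]]] [[El' [Hq' _]]|[Hl' [Eq' _]]]; try congruence.
  destruct Hpp as [<-|Hpp]; destruct Hq as [->| ->], Hq' as [->| ->]; congruence.
Qed.

Lemma own_occ c q l : own (tagof c) q l -> Occ q.
Proof.
  destruct (tagof c) as [[p p']|] eqn:E; simpl; [|tauto].
  destruct (tagof_valid _ _ _ E) as [Hp Hp'].
  intros [[_ [[->| ->] _]]|[_ [-> _]]]; auto.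
Qed.

Lemma own_hs t i k l v : hval (hs i) l = Some v -> i < length conjuncts -> ~ own t (i, k) l.
Proof.
  intros Hl Hi. pose proof (Hsub i Hi l v Hl) as Hh. destruct t as [[p p']|]; simpl; [|tauto].
  intros [[-> _]|[_ [<- [_ E]]]]; [congruence|]. simpl in E. congruence.
Qed.

Definition model : tuple width := fun c => comp (tagof c).

Definition G (q : occ) : tuple width :=
  fun c => hrestrict (model c) (own (tagof c) q).

Definition F (i : nat) : tuple width :=
  fun c => hrestrict (model c) (fun l => ~ exists k, own (tagof c) (i, k) l).

Definition model_rho (a : avar) : hset width :=
  fun g => exists q, Occ q /\ var q = a /\ tsub (G q) g.

Lemma model_rho_upclosed a : upclosed (model_rho a).
Proof.
  intros g g' [q [Hq [Hv Hg]]] Hgg'. exists q. repeat split; auto. eapply tsub_trans; eauto.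
Qed.

Lemma G_overlap q q' : Occ q -> Occ q' -> q = q' \/ fst q <> fst q' ->
  exists c, hval (G q c) B = Some 0%Z /\ hval (G q' c) B = Some 0%Z.
Proof.
  intros Hq Hq' Hqq. destruct (tagof_onto q q' Hq Hq') as [c Ec]. exists c.
  unfold G, model. rewrite Ec, !hrestrict_in by (simpl; tauto).
  split; apply comp_B; discriminate.
Qed.

Lemma G_separated q q' g g' : Occ q -> Occ q' -> tsub (G q) g -> tsub (G q') g' ->
  tdisj g g' -> fst q = fst q' /\ q <> q'.
Proof.
  intros Hq Hq' Sg Sg' D.
  assert (Hn : ~ (q = q' \/ fst q <> fst q')).
  { intros Hqq. destruct (G_overlap q q' Hq Hq' Hqq) as [c [E1 E2]].
    exact (hdisj_clash _ _ _ _ _ (D c) (Sg c _ _ E1) (Sg' c _ _ E2)). }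
  destruct (Nat.eq_dec (fst q) (fst q')); tauto.
Qed.

Lemma meet_below_hs q f g : Occ q -> tsub (G q) g -> tdisj f g -> tsub f model ->
  hsub (meet f) (hs (fst q)).
Proof.
  intros Hq Sg D Sf l v Hl.
  assert (Hh : hval h l = Some v) by exact (Sf Fin.F1 l v (meet_sub f Fin.F1 l v Hl)).
  destruct (hval (hs (fst q)) l) as [w|] eqn:E.
  - rewrite (Hsub _ (Occ_bound q Hq) l w E) in Hh. congruence.
  - exfalso. destruct (tagof_onto q q Hq Hq) as [c Ec].
    assert (Hg : hval (g c) l = Some v).
    { apply Sg. unfold G, model. rewrite Ec, hrestrict_in.
      - apply comp_h, Hh.
      - simpl. right. repeat split; auto. congruence. }
    exact (hdisj_clash _ _ _ _ _ (D c) (meet_sub f c l v Hl) Hg).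
Qed.

Lemma matched_one_conjunct m (gs : nat -> tuple width) (qs : nat -> occ) :
  (forall k k', k < k' < m -> tdisj (gs k) (gs k')) ->
  (forall k, k < m -> Occ (qs k) /\ tsub (G (qs k)) (gs k)) ->
  forall k k', k < m -> k' < m ->
    fst (qs k) = fst (qs k') /\ (snd (qs k) = snd (qs k') -> k = k').
Proof.
  intros Hpd Hqs.
  assert (Hsep : forall k k', k < k' < m -> fst (qs k) = fst (qs k') /\ qs k <> qs k').
  { intros k k' Hkk. destruct (Hqs k) as [Ok Sk]; [lia|].
    destruct (Hqs k') as [Ok' Sk']; [lia|].
    exact (G_separated _ _ _ _ Ok Ok' Sk Sk' (Hpd k k' Hkk)). }
  intros k k' Hk Hk'. destruct (Nat.lt_total k k') as [Lt|[<-|Gt]]; [| tauto |].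
  - destruct (Hsep k k') as [Hf Hne]; [lia|]. split; auto.
    intros Hs. exfalso. apply Hne, injective_projections; auto.
  - destruct (Hsep k' k) as [Hf Hne]; [lia|]. split; auto.
    intros Hs. exfalso. apply Hne, injective_projections; auto.
Qed.

Variables (prim : env -> PA -> Heap -> Prop) (eta : env).

(** The model satisfies every conjunct [phi_i * a_(i,1) * ... * a_(i,M_i)]:
    [F i] carries [phi_i] and [G (i, k)] carries [a_(i,k)]. *)
Lemma model_conjunct i c :
  nth_error conjuncts i = Some c -> avar_free (fst c) -> sem1 prim eta (fst c) (hs i) ->
  sem prim eta model_rho (clause_assn c) model.
Proof.
  intros Ec Fc Hc.
  assert (Hi : i < length conjuncts) by (apply nth_error_Some; congruence).
  assert (Hlen : slots i = length (snd c)) by (unfold slots; rewrite Ec; reflexivity).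
  rewrite sem_clause. apply starvars_intro with (f := F i) (gs := fun k => G (i, k)).
  - apply (sem_upclosed prim Fc).
  - apply (sem_meet prim Fc _ eta model_rho). eapply (sem1_up prim Fc); [exact Hc|].
    apply meet_glb. intros c' l v Hl. unfold F. rewrite hrestrict_in.
    + apply comp_h, (Hsub i Hi l v Hl).
    + intros [k Hk]. exact (own_hs _ _ k _ _ Hl Hi Hk).
  - intros c'. apply hrestrict_sub.
  - intros k Hk. split; [|split].
    + exists (i, k). split; [|split; [|apply tsub_refl]].
      * unfold Occ. cbn [fst snd]. rewrite Hlen. exact Hk.
      * unfold var. simpl. rewrite Ec. reflexivity.
    + intros c'. apply hrestrict_sub.
    + intros c'. apply hrestrict_disj. intros l H1 H2. apply H1. eauto.
  - intros k k' Hkk c'. apply hrestrict_disj. intros l.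
    apply own_excl; simpl; [reflexivity|]. intros E. injection E. lia.
  - intros c' l Hl. destruct (classic (exists k, own (tagof c') (i, k) l)) as [[k Hk]|Hn].
    + right. exists k. split.
      * pose proof (own_occ _ _ _ Hk) as Hq. unfold Occ in Hq. cbn [fst snd] in Hq.
        rewrite Hlen in Hq. exact Hq.
      * unfold G. rewrite hrestrict_in; auto.
    + left. unfold F. rewrite hrestrict_in; auto.
Qed.

Lemma model_lhs :
  (forall c, In c conjuncts -> avar_free (fst c)) ->
  (forall i c, nth_error conjuncts i = Some c -> sem1 prim eta (fst c) (hs i)) ->
  forall c, In c conjuncts -> sem prim eta model_rho (clause_assn c) model.
Proof.
  intros Hcf Hphi c Hc. destruct (In_nth_error _ _ Hc) as [i Ei].
  apply (model_conjunct i); auto.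
Qed.

Lemma model_extract d b bs : avar_free (fst d) -> snd d = b :: bs ->
  sem prim eta model_rho (clause_assn d) model ->
  exists i ci, nth_error conjuncts i = Some ci /\ sem1 prim eta (fst d) (hs i) /\
    forall a, count_occ Nat.eq_dec (snd d) a <= count_occ Nat.eq_dec (snd ci) a.
Proof.
  intros Fd Ed Hd. rewrite sem_clause in Hd.
  destruct (starvars_elim _ _ _ _ Hd) as [f [gs [Hf [Sf [Hgs Hpd]]]]].
  assert (Hq : forall k, exists q, k < length (snd d) ->
            Occ q /\ var q = nth k (snd d) 0 /\ tsub (G q) (gs k)).
  { intros k. destruct (Nat.lt_ge_cases k (length (snd d))) as [Hk|Hk].
    - destruct (Hgs k Hk) as [[q Hq] _]. exists q. auto.
    - exists (0, 0). lia. }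
  destruct (choice _ Hq) as [qs Hqs].
  assert (H0 : 0 < length (snd d)) by (rewrite Ed; simpl; lia).
  assert (Hm : forall k k', k < length (snd d) -> k' < length (snd d) ->
            fst (qs k) = fst (qs k') /\ (snd (qs k) = snd (qs k') -> k = k')).
  { apply (matched_one_conjunct _ gs); auto. intros k Hk. apply Hqs in Hk. tauto. }
  destruct (Hqs 0 H0) as [O0 [_ S0]].
  destruct (nth_error conjuncts (fst (qs 0))) as [ci|] eqn:Ei.
  2:{ apply nth_error_None in Ei. pose proof (Occ_bound _ O0). lia. }
  exists (fst (qs 0)), ci. split; [exact Ei|split].
  - apply (sem_meet prim Fd _ eta model_rho) in Hf. eapply (sem1_up prim Fd); [exact Hf|].
    apply (meet_below_hs (qs 0) f (gs 0)); auto. apply Hgs, H0.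
  - apply (count_inj (snd d) (snd ci) (fun k => snd (qs k))); [|intros k k' Hk Hk'; apply Hm; auto].
    intros k Hk. destruct (Hqs k Hk) as [Ok [Vk _]]. destruct (Hm k 0 Hk H0) as [Hi _].
    unfold Occ, slots in Ok. unfold var in Vk. rewrite Hi, Ei in Ok, Vk. auto.
Qed.

End Countermodel.

Lemma completeness {PA} (prim : env -> PA -> Heap -> Prop) eta (c0 : clause PA) cs ds :
  canonical (c0 :: cs) ds ->
  (forall n, 1 <= n -> nvalid prim n eta (canon_lhs c0 cs) (canon_rhs ds)) ->
  parametricity prim eta (c0 :: cs) ds.
Proof.
  intros [_ [Hcf [Hdf _]]] Hval h hs Hsub Hphi.
  destruct (fresh_loc h) as [B HB].
  assert (Hx : sem prim eta (model_rho (c0 :: cs) h hs B) (canon_rhs ds) (model (c0 :: cs) h B)).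
  { apply Hval; [unfold width; lia|apply model_rho_upclosed|].
    apply sem_canon_lhs, (model_lhs _ h hs B HB Hsub prim eta); auto. }
  apply sem_canon_rhs in Hx. destruct Hx as [d [Hd Hx]].
  destruct (snd d) as [|b bs] eqn:Ed.
  - (* an empty disjunct holds of the root component [h] *)
    right. exists d. repeat split; auto.
    rewrite sem_clause, Ed in Hx. apply (sem_meet prim (Hdf d Hd)) in Hx.
    eapply (sem1_up prim (Hdf d Hd)); [exact Hx|]. exact (meet_sub (model (c0 :: cs) h B) Fin.F1).
  - left. destruct (In_nth_error _ _ Hd) as [j Ej].
    destruct (model_extract _ h hs B HB Hsub prim eta d b bs (Hdf d Hd) Ed Hx)
      as [i [ci [Ei [Hs Hc]]]].
    exists i, j, ci, d. repeat split; auto. intros a _. apply Hc.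
Qed.

Theorem mainTheorem10 (PA : Type) (prim : env -> PA -> Heap -> Prop) (eta : env)
  (c0 : clause PA) (cs : list (clause PA)) (ds : list (clause PA)) :
  canonical (c0 :: cs) ds ->
  (parametricity prim eta (c0 :: cs) ds <->
   forall n : nat, 1 <= n ->
     nvalid prim n eta (canon_lhs c0 cs) (canon_rhs ds)).
Proof.
  intros Hcan. split.
  - intros Hpar [|n] Hn; [lia|]. apply soundness; auto.
  - apply completeness, Hcan.
Qed.
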